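(* For any unit types $U,V$ and any types $T,R$: if $V\to R\preceq U\to T$, then there exist unit types $\vec W=W_1,\dots,W_n$ and type variables $\vec X=X_1,\dots,X_n$ such that $U\to T\equiv(V\to R)[\vec W/\vec X]$.
   Context: Fix a commutative ring $(\mathcal S,+,\times)$. Types: $T ::= U \mid \forall X.T \mid \alpha.T \mid \overline0$; unit types: $U ::= X \mid U\to T \mid \forall X.U$ ($\alpha\in\mathcal S$, $X$ type variables). Type variables are only substituted by unit types; $T[\vec W/\vec X]$ means $T[W_1/X_1]\cdots[W_n/X_n]$ and $(\alpha.T)[U/X]=\alpha.T[U/X]$. Type equivalence $\equiv$ is the least congruence with $\alpha.\overline0\equiv\overline0$, $0.T\equiv\overline0$, $1.T\equiv T$, $\alpha.(\beta.T)\equiv(\alpha\times\beta).T$, $\forall X.\alpha.T\equiv\alpha.\forall X.T$. Write $T\prec R$ if either $R\equiv\forall X.T$ for some $X$, or $T\equiv\forall X.S$ and $R\equiv S[U/X]$ for some type $S$ and unit type $U$; $\preceq$ is the reflexive and transitive closure of $\prec$. *)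

(* Types of the calculus, in de Bruijn representation
   (types are identified up to alpha-conversion, as in the paper). *)
From HB Require Import structures.
From mathcomp Require Import all_boot all_algebra.
Set Implicit Arguments. Unset Strict Implicit. Unset Printing Implicit Defensive.
Import GRing.Theory.
Local Open Scope ring_scope.

Section Types.
Variable S : comPzRingType.

Inductive ty : Type :=
| TVar  : nat -> ty
| TArr  : ty -> ty -> ty
| TAll  : ty -> ty
| TScal : S -> ty -> ty
| TZero : ty.

Fixpoint is_unit (t : ty) : bool :=
  match t with
  | TVar _ => true
  | TArr u r => is_unit u && is_type r
  | TAll u => is_unit u
  | _ => false
  end
with is_type (t : ty) : bool :=
  match t with
  | TVar _ => true
  | TArr u r => is_unit u && is_type r
  | TAll r => is_type r
  | TScal _ r => is_type r
  | TZero => true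
  end.

Definition upren (f : nat -> nat) (k : nat) : nat :=
  if k is k'.+1 then (f k').+1 else 0%N.

Fixpoint ren (f : nat -> nat) (t : ty) : ty :=
  match t with
  | TVar k => TVar (f k)
  | TArr u r => TArr (ren f u) (ren f r)
  | TAll r => TAll (ren (upren f) r)
  | TScal a r => TScal a (ren f r)
  | TZero => TZero
  end.

Definition upsub (sg : nat -> ty) (k : nat) : ty :=
  if k is k'.+1 then ren succn (sg k') else TVar 0.

Fixpoint subst (sg : nat -> ty) (t : ty) : ty :=
  match t with
  | TVar k => sg k
  | TArr u r => TArr (subst sg u) (subst sg r)
  | TAll r => TAll (subst (upsub sg) r)
  | TScal a r => TScal a (subst sg r)
  | TZero => TZero
  end.

Definition subst1 (t : ty) (u : ty) (X : nat) : ty :=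
  subst (fun k => if k == X then u else TVar k) t.

(* forall X. T : bind the free type variable X of T *)
Definition tall (X : nat) (t : ty) : ty :=
  TAll (ren (fun k => if k == X then 0%N else k.+1) t) .

Definition msubst (t : ty) (Ws : seq ty) (Xs : seq nat) : ty :=
  foldl (fun acc p => subst1 acc p.1 p.2) t (zip Ws Xs).

Inductive teq : ty -> ty -> Prop :=
| teq_refl t : is_type t -> teq t t
| teq_sym t r : teq t r -> teq r t
| teq_trans t r q : teq t r -> teq r q -> teq t q
| teq_arr u u' t t' : is_unit u -> is_unit u' -> teq u u' -> teq t t' ->
    teq (TArr u t) (TArr u' t')
| teq_all t t' : teq t t' -> teq (TAll t) (TAll t')
| teq_scal a t t' : teq t t' -> teq (TScal a t) (TScal a t')
| teq_scal_zero a : teq (TScal a TZero) TZero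
| teq_zero_scal t : is_type t -> teq (TScal 0 t) TZero
| teq_one_scal t : is_type t -> teq (TScal 1 t) t
| teq_scal_scal a b t : is_type t -> teq (TScal a (TScal b t)) (TScal (a * b) t)
| teq_all_scal a t : is_type t -> teq (TAll (TScal a t)) (TScal a (TAll t)).

Definition prec (t r : ty) : Prop :=
  is_type t /\ is_type r /\
  ((exists X : nat, teq r (tall X t)) \/
   (exists (X : nat) (s u : ty), is_type s /\ is_unit u /\
      teq t (tall X s) /\ teq r (subst1 s u X))).

Inductive preceq : ty -> ty -> Prop :=
| preceq_refl t : preceq t t
| preceq_step t r q : prec t r -> preceq r q -> preceq t q.

End Types.

From mathcomp Require Import all_boot all_algebra zify.
Set Implicit Arguments. Unset Strict Implicit. Unset Printing Implicit Defensive.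
Import GRing.Theory.

(* Every type has a normal form [nf] (scalars pushed out of the quantifiers,
   merged, and dropped when 0 or 1) which, when 1 <> 0, is a complete invariant
   of type equivalence.  Along a chain V -> R < ... < U -> T the normal form
   always reads forall^n. sg (nf (V -> R)) for a substitution sg of normal unit
   types: a generalisation adds a quantifier, and an instantiation removes the
   outermost one while composing sg with the instantiating unit type.  Since
   U -> T is an arrow, n = 0 at the end; the simultaneous substitution sg is then
   realised by sequential ones after renaming the variables of V -> R apart.
   If 1 = 0, every type is equivalent to 0. *)

Section TypeSyntax.
Variable S : comPzRingType.
Local Notation ty := (ty S).
Local Notation TV := (TVar S).

Lemma ren_ext (f g : nat -> nat) (t : ty) : f =1 g -> ren f t = ren g t.
Proof.
elim: t f g => [k|u IHu r IHr|r IHr|a r IHr|] f g E //=.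
- by rewrite E.
- by rewrite (IHu f g E) (IHr f g E).
- by rewrite (IHr (upren f) (upren g)) // => -[|k] //=; rewrite E.
- by rewrite (IHr f g E).
Qed.

Lemma subst_ext (f g : nat -> ty) (t : ty) : f =1 g -> subst f t = subst g t.
Proof.
elim: t f g => [k|u IHu r IHr|r IHr|a r IHr|] f g E //=.
- by rewrite (IHu f g E) (IHr f g E).
- by rewrite (IHr (upsub f) (upsub g)) // => -[|k] //=; rewrite E.
- by rewrite (IHr f g E).
Qed.

Lemma ren_comp (f g : nat -> nat) (t : ty) : ren f (ren g t) = ren (f \o g) t.
Proof.
elim: t f g => [k|u IHu r IHr|r IHr|a r IHr|] f g //=.
- by rewrite IHu IHr.
- by rewrite IHr; congr TAll; apply: ren_ext => -[|k].
- by rewrite IHr.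
Qed.

Lemma subst_ren (f : nat -> nat) (sg : nat -> ty) (t : ty) :
  subst sg (ren f t) = subst (sg \o f) t.
Proof.
elim: t f sg => [k|u IHu r IHr|r IHr|a r IHr|] f sg //=.
- by rewrite IHu IHr.
- by rewrite IHr; congr TAll; apply: subst_ext => -[|k].
- by rewrite IHr.
Qed.

Lemma ren_subst (f : nat -> nat) (sg : nat -> ty) (t : ty) :
  ren f (subst sg t) = subst (ren f \o sg) t.
Proof.
elim: t f sg => [k|u IHu r IHr|r IHr|a r IHr|] f sg //=.
- by rewrite IHu IHr.
- rewrite IHr; congr TAll; apply: subst_ext => -[|k] //=.
  by rewrite !ren_comp; apply: ren_ext.
- by rewrite IHr.
Qed.

Lemma subst_comp (f g : nat -> ty) (t : ty) :
  subst f (subst g t) = subst (subst f \o g) t.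
Proof.
elim: t f g => [k|u IHu r IHr|r IHr|a r IHr|] f g //=.
- by rewrite IHu IHr.
- rewrite IHr; congr TAll; apply: subst_ext => -[|k] //=.
  by rewrite subst_ren ren_subst; apply: subst_ext.
- by rewrite IHr.
Qed.

Lemma subst_id (t : ty) : subst TV t = t.
Proof.
elim: t => [k|u IHu r IHr|r IHr|a r IHr|] //=.
- by rewrite IHu IHr.
- by rewrite (@subst_ext _ TV) ?IHr // => -[|k].
- by rewrite IHr.
Qed.

Lemma ren_iter_all n (f : nat -> nat) (t : ty) :
  ren f (iter n (@TAll S) t) = iter n (@TAll S) (ren (iter n upren f) t).
Proof.
by elim: n f => // n IH f; rewrite iterS /= IH -iterSr.
Qed.

Lemma subst_iter_all n (sg : nat -> ty) (t : ty) :
  subst sg (iter n (@TAll S) t) = iter n (@TAll S) (subst (iter n (@upsub S) sg) t).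
Proof.
by elim: n sg => // n IH sg; rewrite iterS /= IH -iterSr.
Qed.

Lemma unit_is_type (t : ty) : is_unit t -> is_type t.
Proof. by elim: t => //= r IH; apply: IH. Qed.

Lemma ren_wf (f : nat -> nat) (t : ty) :
  (is_unit t -> is_unit (ren f t)) /\ (is_type t -> is_type (ren f t)).
Proof.
elim: t f => [k|u IHu r IHr|r IHr|a r IHr|] f //=.
- by split=> /andP[/(proj1 (IHu f)) -> /(proj2 (IHr f)) ->].
- by split=> // /(proj2 (IHr f)).
Qed.

Lemma subst_wf (sg : nat -> ty) (t : ty) : (forall k, is_unit (sg k)) ->
  (is_unit t -> is_unit (subst sg t)) /\ (is_type t -> is_type (subst sg t)).
Proof.
elim: t sg => [k|u IHu r IHr|r IHr|a r IHr|] sg Hsg //=.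
- by split=> // _; apply: unit_is_type.
- by split=> /andP[/(proj1 (IHu sg Hsg)) -> /(proj2 (IHr sg Hsg)) ->].
- by apply: IHr => -[|k] //=; apply: (proj1 (ren_wf _ _)).
- by split=> // /(proj2 (IHr sg Hsg)).
Qed.

Fixpoint free_in (X : nat) (t : ty) : bool :=
  match t with
  | TVar k => k == X
  | TArr u r => free_in X u || free_in X r
  | TAll r => free_in X.+1 r
  | TScal _ r => free_in X r
  | TZero => false
  end.

Lemma eq_subst_free (f g : nat -> ty) (t : ty) :
  (forall k, free_in k t -> f k = g k) -> subst f t = subst g t.
Proof.
elim: t f g => [k|u IHu r IHr|r IHr|a r IHr|] f g //= E.
- exact: E.
- by rewrite (IHu f g) ?(IHr f g) // => k Hk; apply: E; rewrite Hk ?orbT.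
- by rewrite (IHr (upsub f) (upsub g)) // => -[|k] //= Hk; rewrite E.
- by rewrite (IHr f g).
Qed.

Lemma free_in_bounded (t : ty) : exists n, forall k, free_in k t -> (k < n)%N.
Proof.
elim: t => [k|u [n1 H1] r [n2 H2]|r [n H]|a r [n H]|].
- by exists k.+1 => j /eqP <-.
- exists (maxn n1 n2) => k /orP[/H1|/H2]; rewrite leq_max => ->; rewrite ?orbT //.
- by exists n => k /H; apply: ltnW.
- by exists n.
- by exists 0%N.
Qed.

Lemma free_in_bounded_family (sg : nat -> ty) N :
  exists M, forall k j, (k < N)%N -> free_in j (sg k) -> (j < M)%N.
Proof.
elim: N => [|N [M HM]]; first by exists 0%N.
have [m Hm] := free_in_bounded (sg N).
exists (maxn M m) => k j; rewrite ltnS leq_eqVlt leq_max => /orP[/eqP ->|Hk] Hj.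
  by rewrite Hm ?orbT.
by rewrite (HM k j).
Qed.


Definition par_subst (Ws : seq ty) (Xs : seq nat) (k : nat) : ty :=
  nth (TV k) Ws (index k Xs).

Definition fresh_for (Xs : seq nat) (w : ty) : bool :=
  all (fun X => ~~ free_in X w) Xs.

Lemma par_subst_map (f : nat -> ty) (g : nat -> nat) (Xs : seq nat) k :
  injective g -> k \in Xs -> par_subst (map f Xs) (map g Xs) (g k) = f k.
Proof.
move=> Hg Hk.
by rewrite /par_subst index_map // (nth_map 0%N) ?index_mem // nth_index.
Qed.

Lemma par_subst_fresh (Ws : seq ty) (Xs : seq nat) (w : ty) :
  size Ws = size Xs -> fresh_for Xs w -> subst (par_subst Ws Xs) w = w.
Proof.
move=> Hsz /allP Hw; rewrite -[RHS]subst_id; apply: eq_subst_free => k Hk.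
have HkXs : k \notin Xs by apply: contraL Hk => /Hw.
by rewrite /par_subst nth_default // memNindex // Hsz.
Qed.

Lemma msubst_cons (t w : ty) (Ws : seq ty) X (Xs : seq nat) :
  msubst t (w :: Ws) (X :: Xs) = msubst (subst1 t w X) Ws Xs.
Proof. by []. Qed.

Lemma msubst_cat (t : ty) (Ws1 Ws2 : seq ty) (Xs1 Xs2 : seq nat) :
  size Ws1 = size Xs1 ->
  msubst t (Ws1 ++ Ws2) (Xs1 ++ Xs2) = msubst (msubst t Ws1 Xs1) Ws2 Xs2.
Proof. by move=> Hsz; rewrite /msubst zip_cat // foldl_cat. Qed.

(* As no [W_j] mentions an [X_i], the sequential substitutions act simultaneously. *)
Lemma msubst_par (t : ty) (Ws : seq ty) (Xs : seq nat) :
  size Ws = size Xs -> uniq Xs -> all (fresh_for Xs) Ws ->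
  msubst t Ws Xs = subst (par_subst Ws Xs) t.
Proof.
elim: Ws Xs t => [|w Ws IH] [|X Xs] //= t; first by rewrite subst_id.
move=> [Hsz] /andP[HX HXs] /andP[/andP[_ Hw] HWs].
rewrite msubst_cons IH //; last by apply: sub_all HWs => w' /andP[].
rewrite /subst1 subst_comp; apply: subst_ext => k /=.
case: eqVneq => [->|Hk]; first by rewrite par_subst_fresh // /par_subst /= eqxx.
by rewrite /par_subst /= eq_sym (negbTE Hk).
Qed.

Lemma msubst_of_subst (t : ty) (sg : nat -> ty) : (forall k, is_unit (sg k)) ->
  exists (Ws : seq ty) (Xs : seq nat),
    [/\ size Ws = size Xs, all (@is_unit S) Ws & msubst t Ws Xs = subst sg t].
Proof.
move=> Hsg.
have [N HN] := free_in_bounded t.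
have [M0 HM0] := free_in_bounded_family sg N.
pose M := maxn M0 N.
have HNM : (N <= M)%N by apply: leq_maxr.
have HM k j : (k < N)%N -> free_in j (sg k) -> (j < M)%N.
  by move=> Hk /(HM0 k j Hk) Hj; rewrite leq_max Hj.
(* first rename the free variables [k < N] of [t] to [M + k], then fill them in *)
pose Xs1 := iota 0 N; pose Ws1 := [seq TV (M + k) | k <- Xs1].
pose Xs2 := [seq M + k | k <- Xs1]; pose Ws2 := map sg Xs1.
have sz1 : size Ws1 = size Xs1 by rewrite size_map.
have sz2 : size Ws2 = size Xs2 by rewrite !size_map.
exists (Ws1 ++ Ws2), (Xs1 ++ Xs2); split.
- by rewrite !size_cat sz1 sz2.
- by rewrite all_cat !all_map; apply/andP; split; apply/allP => k _ /=.
rewrite msubst_cat // !msubst_par //.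
- rewrite subst_comp; apply: eq_subst_free => k /HN Hk.
  have Hk1 : k \in Xs1 by rewrite mem_iota.
  have := par_subst_map (TV \o addn M) (@inj_id _) Hk1; rewrite map_id /= => ->.
  exact: par_subst_map (@addnI M) Hk1.
- by apply: iota_uniq.
- rewrite all_map; apply/allP => k _; apply/allP => j /=.
  by move=> /[!mem_iota] /andP[_ Hj]; apply/eqP; lia.
- by rewrite map_inj_uniq ?iota_uniq //; apply: addnI.
- rewrite all_map; apply/allP => k Hk; apply/allP => _ /mapP[j _ ->] /=.
  by rewrite mem_iota in Hk; apply/negP => /(HM k _ Hk); lia.
Qed.

End TypeSyntax.

Section NormalForm.
Variable S : comPzRingType.
Local Notation ty := (ty S).
Local Notation TV := (TVar S).
Local Notation TZ := (TZero S).

Definition atomic (x : ty) : bool :=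
  match x with TZero => false | TScal _ _ => false | _ => true end.

Definition scal_atom (a : S) (y : ty) : ty :=
  if a == 0%R then TZ else if a == 1%R then y else TScal a y.
Arguments scal_atom : simpl never.

Definition all_norm (x : ty) : ty :=
  match x with TZero => TZ | TScal c y => TScal c (TAll y) | y => TAll y end.

Definition scal_norm (a : S) (x : ty) : ty :=
  match x with TZero => TZ | TScal c y => scal_atom (a * c) y | y => scal_atom a y end.

(* The values of [nf] are [0], atomic types, and [c.y] with [c <> 0, 1] and
   [y] atomic (see [nf_shape_nf]). *)
Fixpoint nf (t : ty) : ty :=
  match t with
  | TVar k => TV k
  | TArr u r => TArr (nf u) (nf r)
  | TAll r => all_norm (nf r)
  | TScal a r => scal_norm a (nf r)
  | TZero => TZ
  end.

Definition nf_shape (x : ty) : bool :=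
  match x with TScal c y => [&& c != 0%R, c != 1%R & atomic y] | _ => true end.

Lemma atomic_ren (f : nat -> nat) (x : ty) : atomic (ren f x) = atomic x.
Proof. by case: x. Qed.

Lemma all_norm_atomic (y : ty) : atomic y -> all_norm y = TAll y.
Proof. by case: y. Qed.

Lemma all_norm_TAll (x y : ty) : all_norm x = TAll y -> x = y.
Proof. by case: x => //= [k [<-]|u r [<-]|r [<-]]. Qed.

Lemma scal_norm_atomic a (y : ty) : atomic y -> scal_norm a y = scal_atom a y.
Proof. by case: y. Qed.

Lemma scal_atom_ren (f : nat -> nat) a (y : ty) :
  ren f (scal_atom a y) = scal_atom a (ren f y).
Proof. by rewrite /scal_atom; case: ifP => // _; case: ifP. Qed.

Lemma scal_atom_subst (sg : nat -> ty) a (y : ty) :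
  subst sg (scal_atom a y) = scal_atom a (subst sg y).
Proof. by rewrite /scal_atom; case: ifP => // _; case: ifP. Qed.

Lemma all_norm_ren (f : nat -> nat) (x : ty) :
  ren f (all_norm x) = all_norm (ren (upren f) x).
Proof. by case: x. Qed.

Lemma scal_norm_ren (f : nat -> nat) a (x : ty) :
  ren f (scal_norm a x) = scal_norm a (ren f x).
Proof. by case: x => * //=; rewrite ?scal_atom_ren. Qed.

Lemma nf_ren (f : nat -> nat) (t : ty) : nf (ren f t) = ren f (nf t).
Proof.
elim: t f => [k|u IHu r IHr|r IHr|a r IHr|] f //=.
- by rewrite IHu IHr.
- by rewrite IHr all_norm_ren.
- by rewrite IHr scal_norm_ren.
Qed.

Lemma all_norm_subst (sg : nat -> ty) (x : ty) : (forall k, atomic (sg k)) ->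
  subst sg (all_norm x) = all_norm (subst (upsub sg) x).
Proof.
move=> Hsg; case: x => //= k; rewrite all_norm_atomic //.
by case: k => //= k; rewrite atomic_ren.
Qed.

Lemma scal_norm_subst (sg : nat -> ty) a (x : ty) : (forall k, atomic (sg k)) ->
  subst sg (scal_norm a x) = scal_norm a (subst sg x).
Proof.
move=> Hsg; case: x => [k|u r|r|c y|] /=; rewrite ?scal_atom_subst //.
by rewrite scal_norm_atomic.
Qed.

Lemma nf_subst (sg : nat -> ty) (t : ty) : (forall k, atomic (nf (sg k))) ->
  nf (subst sg t) = subst (nf \o sg) (nf t).
Proof.
elim: t sg => [k|u IHu r IHr|r IHr|a r IHr|] sg Hsg //=.
- by rewrite IHu // IHr.
- rewrite IHr; last by case=> //= k; rewrite nf_ren atomic_ren.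
  rewrite all_norm_subst //; congr all_norm; apply: subst_ext => -[|k] //=.
  by rewrite nf_ren.
- by rewrite IHr // scal_norm_subst.
Qed.

Lemma nf_shape_scal_atom a (y : ty) : atomic y -> nf_shape (scal_atom a y).
Proof.
move=> Hy; rewrite /scal_atom; case: ifP => // H0; case: ifP => [_|H1] /=.
  by case: y Hy.
by rewrite H0 H1 Hy.
Qed.

Lemma nf_shape_nf (t : ty) : nf_shape (nf t).
Proof.
elim: t => [k|u _ r _|r IHr|a r IHr|] //=.
- by case: (nf r) IHr => //= c y /and3P[-> -> _].
- case: (nf r) IHr => [k|u r'|r'|c y|] //= H; apply: nf_shape_scal_atom => //.
  by case/and3P: H.
Qed.

Lemma nf_shapeP (x : ty) : nf_shape x ->
  [\/ x = TZ, exists c y, [/\ x = TScal c y, c != 0%R, c != 1%R & atomic y]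
    | atomic x].
Proof.
case: x => [k|u r|r|c y|] /=; try by constructor 3.
- by case/and3P => *; constructor 2; exists c, y.
- by constructor 1.
Qed.

Lemma scal_atom0 (y : ty) : scal_atom 0 y = TZ.
Proof. by rewrite /scal_atom eqxx. Qed.

Lemma scal_norm_scal_atom a c (y : ty) : atomic y ->
  scal_norm a (scal_atom c y) = scal_atom (a * c) y.
Proof.
move=> Hy; rewrite /scal_atom; case: eqP => [->|_]; first by rewrite mulr0 eqxx.
by case: eqP => [->|//]; rewrite mulr1 scal_norm_atomic.
Qed.

Lemma all_norm_scal_atom c (y : ty) : atomic y ->
  all_norm (scal_atom c y) = scal_atom c (TAll y).
Proof.
move=> Hy; rewrite /scal_atom; case: eqP => // _; case: eqP => // _.
by rewrite all_norm_atomic.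
Qed.

Lemma teq_nf (t r : ty) : (1%R : S) != 0%R -> teq t r -> nf t = nf r.
Proof.
move=> H10; elim=> {t r} //=.
- by move=> t r q _ -> _ ->.
- by move=> u u' t t' _ _ _ -> _ ->.
- by move=> t t' _ ->.
- by move=> a t t' _ ->.
- move=> t _; case: (nf_shapeP (nf_shape_nf t)) => [->|[c [y [-> _ _ _]]]|Ht] //=.
    by rewrite mul0r scal_atom0.
  by rewrite scal_norm_atomic // scal_atom0.
- move=> t _; case: (nf_shapeP (nf_shape_nf t)) => [->|[c [y [-> H0 H1 _]]]|Ht] //=.
    by rewrite mul1r /scal_atom (negbTE H0) (negbTE H1).
  by rewrite scal_norm_atomic // /scal_atom (negbTE H10) eqxx.
- move=> a b t _; case: (nf_shapeP (nf_shape_nf t)) => [->|[c [y [-> _ _ Hy]]]|Ht] //=.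
    by rewrite scal_norm_scal_atom // mulrA.
  by rewrite (scal_norm_atomic b Ht) scal_norm_scal_atom // scal_norm_atomic.
- move=> a t _; case: (nf_shapeP (nf_shape_nf t)) => [->|[c [y [-> _ _ Hy]]]|Ht] //=.
    by rewrite all_norm_scal_atom.
  by rewrite (scal_norm_atomic a Ht) all_norm_scal_atom // all_norm_atomic // scal_norm_atomic.
Qed.

Lemma is_type_scal_atom a (y : ty) : is_type y -> is_type (scal_atom a y).
Proof. by rewrite /scal_atom; case: ifP => // _; case: ifP. Qed.

Lemma nf_wf (t : ty) :
  (is_unit t -> is_unit (nf t) && atomic (nf t)) /\ (is_type t -> is_type (nf t)).
Proof.
elim: t => [k|u [IHu1 IHu2] r [IHr1 IHr2]|r [IHr1 IHr2]|a r [IHr1 IHr2]|] //=.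
- by split=> /andP[/IHu1/andP[-> _] /IHr2 ->].
- split; first by move=> /IHr1 /andP[H1 H2]; rewrite all_norm_atomic //= H1.
  by move=> /IHr2; case: (nf r).
- by split=> // /IHr2; case: (nf r) => //= *; apply: is_type_scal_atom.
Qed.

Lemma teq_scal_atom a (y : ty) : is_type y -> teq (TScal a y) (scal_atom a y).
Proof.
move=> Hy; rewrite /scal_atom; case: eqP => [->|_]; first exact: teq_zero_scal.
case: eqP => [->|_]; first exact: teq_one_scal.
exact: teq_refl.
Qed.

Lemma teq_scal_norm a (x : ty) : is_type x -> teq (TScal a x) (scal_norm a x).
Proof.
case: x => [k|u r|r|c y|] Hx /=; try exact: teq_scal_atom.
- exact: teq_trans (teq_scal_scal _ _ _) (teq_scal_atom _ _).
- exact: teq_scal_zero.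
Qed.

Lemma teq_all_norm (x : ty) : is_type x -> teq (TAll x) (all_norm x).
Proof.
case: x => [k|u r|r|c y|] Hx /=; try exact: teq_refl.
- exact: teq_all_scal.
(* [forall X. 0 = forall X. 0.0 = 0.forall X. 0 = 0] *)
- apply: teq_trans (teq_all (teq_sym (teq_scal_zero 0%R))) _.
  apply: teq_trans (teq_all_scal _ _) _ => //.
  exact: teq_zero_scal.
Qed.

Lemma teq_to_nf (t : ty) : is_type t -> teq t (nf t).
Proof.
elim: t => [k|u IHu r IHr|r IHr|a r IHr|] //=; try by move=> *; apply: teq_refl.
- move=> /andP[Hu Hr]; have /andP[Hu' _] := proj1 (nf_wf u) Hu.
  by apply: teq_arr => //; [apply: IHu; apply: unit_is_type | apply: IHr].
- move=> Hr; apply: teq_trans (teq_all (IHr Hr)) _.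
  by apply: teq_all_norm; apply: (proj2 (nf_wf r)).
- move=> Hr; apply: teq_trans (teq_scal a (IHr Hr)) _.
  by apply: teq_scal_norm; apply: (proj2 (nf_wf r)).
Qed.

Lemma nf_teq (t r : ty) : is_type t -> is_type r -> nf t = nf r -> teq t r.
Proof.
move=> Ht Hr E; apply: teq_trans (teq_to_nf Ht) _.
by rewrite E; apply: teq_sym; apply: teq_to_nf.
Qed.

End NormalForm.

Arguments nf {S}.

Section Instantiation.
Variable S : comPzRingType.
Hypothesis one_neq0 : (1%R : S) != 0%R.
Local Notation ty := (ty S).
Local Notation TV := (TVar S).

Definition normal_unit (x : ty) : Prop := is_unit x /\ nf x = x.
Definition normal_units (sg : nat -> ty) : Prop := forall k, normal_unit (sg k).

Lemma normal_unit_ren (f : nat -> nat) (x : ty) :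
  normal_unit x -> normal_unit (ren f x).
Proof. by case=> Hx Ex; split; [apply: (proj1 (ren_wf f x)) | rewrite nf_ren Ex]. Qed.

Lemma normal_units_iter_upsub n (sg : nat -> ty) :
  normal_units sg -> normal_units (iter n (@upsub S) sg).
Proof.
elim: n => //= n IH /IH Hsg [|k] //=.
exact: normal_unit_ren.
Qed.

Lemma normal_unit_atomic (x : ty) : normal_unit x -> atomic (nf x).
Proof. by case=> Hx _; case/andP: (proj1 (nf_wf x) Hx). Qed.

Lemma nf_subst_normal (sg : nat -> ty) (t : ty) :
  normal_units sg -> nf (subst sg t) = subst sg (nf t).
Proof.
move=> Hsg; rewrite nf_subst; last by move=> k; apply: normal_unit_atomic.
by apply: subst_ext => k /=; case: (Hsg k).
Qed.

Lemma normal_unit_subst (sg : nat -> ty) (x : ty) :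
  normal_units sg -> normal_unit x -> normal_unit (subst sg x).
Proof.
move=> Hsg [Hx Ex]; split; last by rewrite nf_subst_normal // Ex.
exact: (proj1 (subst_wf _ (fun k => proj1 (Hsg k)))).
Qed.

Lemma normal_unit_nf (u : ty) : is_unit u -> normal_unit (nf u).
Proof.
move=> Hu; split; first by case/andP: (proj1 (nf_wf u) Hu).
by rewrite -(teq_nf one_neq0 (teq_to_nf (unit_is_type Hu))).
Qed.

Definition inst_of (C t : ty) : Prop :=
  exists n (sg : nat -> ty), normal_units sg /\ nf t = iter n (@TAll S) (subst sg C).

Lemma inst_of_nf (t : ty) : inst_of (nf t) t.
Proof. by exists 0%N, TV; split => //=; rewrite subst_id. Qed.

Lemma inst_of_tall (A B t r : ty) X :
  inst_of (TArr A B) t -> teq r (tall X t) -> inst_of (TArr A B) r.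
Proof.
move=> [n [sg [Hsg E]]] Hr.
rewrite /inst_of (teq_nf one_neq0 Hr) /tall /= nf_ren E ren_iter_all.
exists n.+1, (ren (iter n upren (fun k => if k == X then 0%N else k.+1)) \o sg).
split; first by move=> k; apply: normal_unit_ren.
by rewrite ren_subst all_norm_atomic //; case: n {E}.
Qed.

Lemma inst_of_subst1 (A B t r s u : ty) X :
  inst_of (TArr A B) t -> teq t (tall X s) -> teq r (subst1 s u X) -> is_unit u ->
  inst_of (TArr A B) r.
Proof.
move=> [n [sg [Hsg E]]] Ht Hr Hu.
pose bindX k := if k == X then 0%N else k.+1.
pose inst k := if k is k'.+1 then TV k' else u.
have Es : iter n (@TAll S) (subst sg (TArr A B)) = all_norm (nf (ren bindX s)).
  by rewrite -E; apply: teq_nf one_neq0 Ht.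
(* an arrow is not equivalent to a generalisation, so [n > 0] *)
case: n {E} Es => [|m] Es; first by move: Es; case: (nf _).
have {}Es : nf (ren bindX s) = iter m (@TAll S) (subst sg (TArr A B)).
  by apply: all_norm_TAll; rewrite -Es.
have Einst : subst1 s u X = subst inst (ren bindX s).
  by rewrite /subst1 subst_ren; apply: subst_ext => k /=; rewrite /bindX; case: eqP.
have Hinst : normal_units (nf \o inst) by case=> [|k] //=; apply: normal_unit_nf.
rewrite /inst_of (teq_nf one_neq0 Hr) Einst nf_subst; last first.
  by case=> [|k] //=; case/andP: (proj1 (nf_wf u) Hu).
rewrite Es subst_iter_all subst_comp.
exists m, (subst (iter m (@upsub S) (nf \o inst)) \o sg); split => // k.
by apply: normal_unit_subst => //; apply: normal_units_iter_upsub.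
Qed.

Lemma inst_of_preceq (A B t r : ty) :
  preceq t r -> inst_of (TArr A B) t -> inst_of (TArr A B) r.
Proof.
elim=> {t r} // t r q [_ [_ [[X HX]|[X [s [u [_ [Hu [H1 H2]]]]]]]]] _ IH P;
  apply: IH.
- exact: inst_of_tall HX.
- exact: inst_of_subst1 H1 H2 Hu.
Qed.

End Instantiation.

Lemma teq_trivial_ring (S : comPzRingType) (t r : ty S) :
  (1%R : S) = 0%R -> is_type t -> is_type r -> teq t r.
Proof.
move=> E10.
have teq0 (x : ty S) : is_type x -> teq x (TZero S).
  move=> Hx; apply: teq_trans (teq_sym (teq_one_scal Hx)) _.
  by rewrite E10; apply: teq_zero_scal.
by move=> Ht Hr; apply: teq_trans (teq0 _ Ht) (teq_sym (teq0 _ Hr)).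
Qed.

Theorem mainTheorem16 (S : comPzRingType) (U V T R : ty S) :
  is_unit U -> is_unit V -> is_type T -> is_type R ->
  preceq (TArr V R) (TArr U T) ->
  exists (Ws : seq (ty S)) (Xs : seq nat),
    size Ws = size Xs /\ all (@is_unit S) Ws /\
    teq (TArr U T) (msubst (TArr V R) Ws Xs).
Proof.
move=> HU HV HT HR Hprec.
have HUT : is_type (TArr U T) by rewrite /= HU HT.
have HVR : is_type (TArr V R) by rewrite /= HV HR.
have [E10 | one_neq0] := eqVneq (1%R : S) 0%R.
  by exists [::], [::]; do 2!split => //; apply: teq_trivial_ring.
have [n [sg [Hsg E]]] := inst_of_preceq one_neq0 Hprec (inst_of_nf (TArr V R)).
case: n E => [|//] /= E.
have [Ws [Xs [Hsz HWs Em]]] := msubst_of_subst (TArr V R) (fun k => proj1 (Hsg k)).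
exists Ws, Xs; do 2!split => //; rewrite Em.
apply: nf_teq => //; first exact: (proj2 (subst_wf _ (fun k => proj1 (Hsg k)))).
by rewrite nf_subst_normal //; exact: E.
Qed.
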